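(* For $d\ge 9$, the VC-dimension of the range space whose ground set is the set of hyperplanes in $\mathbb{R}^d$ is at least $d(d+1)$ and at most $5d^2\log_2 d$. Here each $d$-simplex $\sigma$ defines the range consisting of the hyperplanes meeting the interior of $\sigma$.
   Context: A finite set $H$ of hyperplanes is shattered by simplices if every subset $S\subseteq H$ equals $\{h\in H: h\cap \mathrm{int}(\sigma)\ne\emptyset\}$ for some $d$-simplex $\sigma$. The VC-dimension is the largest size of a shattered set. *)

From Stdlib Require Import Reals List.
Open Scope R_scope.

(* A point of R^d is a function nat -> R, of which only coordinates 0..d-1 matter. *)
Definition pt := nat -> R.

Fixpoint sumR (n : nat) (f : nat -> R) : R :=
  match n with O => 0 | S m => sumR m f + f m end.

Definition dot (d : nat) (a x : pt) : R := sumR d (fun i => a i * x i).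

Definition is_hyperplane (d : nat) (h : pt -> Prop) : Prop :=
  exists (a : pt) (b : R),
    (exists i, (i < d)%nat /\ a i <> 0) /\ forall x, h x <-> dot d a x = b.

(* A d-simplex is given by d+1 vertices v 0, ..., v d that are affinely independent. *)
Definition affinely_independent (d : nat) (v : nat -> pt) : Prop :=
  forall l : nat -> R,
    sumR (S d) l = 0 ->
    (forall i, (i < d)%nat -> sumR (S d) (fun j => l j * v j i) = 0) ->
    forall j, (j <= d)%nat -> l j = 0.

Definition is_simplex (d : nat) (v : nat -> pt) : Prop := affinely_independent d v.

Definition in_interior (d : nat) (v : nat -> pt) (x : pt) : Prop :=
  exists l : nat -> R,
    (forall j, (j <= d)%nat -> 0 < l j) /\ sumR (S d) l = 1 /\
    forall i, (i < d)%nat -> x i = sumR (S d) (fun j => l j * v j i).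

Definition meets_interior (d : nat) (v : nat -> pt) (h : pt -> Prop) : Prop :=
  exists x, in_interior d v x /\ h x.

(* A finite set of hyperplanes, listed without repetition (as sets), shattered by simplices. *)
Definition shattered (d : nat) (H : list (pt -> Prop)) : Prop :=
  (forall k, (k < length H)%nat -> is_hyperplane d (nth k H (fun _ => False))) /\
  (forall k1 k2, (k1 < length H)%nat -> (k2 < length H)%nat -> k1 <> k2 ->
     ~ (forall x, nth k1 H (fun _ => False) x <-> nth k2 H (fun _ => False) x)) /\
  (forall S : nat -> Prop,
     exists v : nat -> pt, is_simplex d v /\
       forall k, (k < length H)%nat ->
         (meets_interior d v (nth k H (fun _ => False)) <-> S k)).

Definition log2 (x : R) : R := ln x / ln 2.

(* A hyperplane {x | a.x = b} meets the interior of the simplex with vertices v_0, ..., v_d iff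
   the numbers a.v_j - b are all zero or take both signs.  Hence, for n shattered hyperplanes,
   the 2^n subsets are told apart by the sign patterns of n (d + 1) affine functions of the
   d (d + 1) vertex coordinates.  Cutting along the zero set of one function shows that N affine
   functions of m variables have at most F(N, m) sign patterns, where
   F(N + 1, m + 1) = F(N, m + 1) + 2 F(N, m); and F(N, m) <= (1 + 2x)^N / x^m with
   x = 1 / (20 (d + 1)) gives n <= 5 d^2 log2 d.

   For the lower bound, through each vertex of a fixed simplex pass d hyperplanes with independent
   normals, leaving the rest of the simplex strictly on one side.  Moving that vertex slightly
   decides independently, for each of them, whether it cuts the interior: d (d + 1) hyperplanes
   are shattered. *)

From Stdlib Require Import Reals List Lra Lia ClassicalEpsilon Classical.
Import ListNotations.
Open Scope R_scope.

(** * Hyperplanes and the interior of a simplex *)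

Lemma sumR_ext n f g : (forall i, (i < n)%nat -> f i = g i) -> sumR n f = sumR n g.
Proof. induction n; simpl; intros H; auto. rewrite IHn, H; auto. Qed.

Lemma sumR_plus n f g : sumR n (fun i => f i + g i) = sumR n f + sumR n g.
Proof. induction n; simpl; [lra|]. rewrite IHn; lra. Qed.

Lemma sumR_minus n f g : sumR n (fun i => f i - g i) = sumR n f - sumR n g.
Proof. induction n; simpl; [lra|]. rewrite IHn; lra. Qed.

Lemma sumR_scal n c f : sumR n (fun i => c * f i) = c * sumR n f.
Proof. induction n; simpl; [lra|]. rewrite IHn; lra. Qed.

Lemma sumR_const n c : sumR n (fun _ => c) = INR n * c.
Proof. induction n; [simpl; lra|]. rewrite S_INR. simpl. rewrite IHn; lra. Qed.

Lemma sumR_swap n m (f : nat -> nat -> R) :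
  sumR n (fun i => sumR m (fun j => f i j)) = sumR m (fun j => sumR n (fun i => f i j)).
Proof.
  induction n; simpl.
  - rewrite sumR_const; lra.
  - rewrite IHn, <- sumR_plus. reflexivity.
Qed.

Lemma sumR_succ_l n f : sumR (S n) f = f O + sumR n (fun j => f (S j)).
Proof. induction n; simpl in *; [lra|]. rewrite IHn; lra. Qed.

Lemma sumR_indicator n k c : (k < n)%nat ->
  sumR n (fun i => if Nat.eqb i k then c else 0) = c.
Proof.
  induction n; intros Hk; [lia|]. simpl.
  destruct (Nat.eqb_spec n k) as [->|Hne].
  - rewrite (sumR_ext _ _ (fun _ => 0)), sumR_const; [lra|].
    intros i Hi. destruct (Nat.eqb_spec i k); [lia|auto].
  - rewrite IHn; [lra|lia].
Qed.

Lemma sumR_le n f g : (forall i, (i < n)%nat -> f i <= g i) -> sumR n f <= sumR n g.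
Proof.
  induction n; simpl; intros H; [lra|].
  assert (sumR n f <= sumR n g) by (apply IHn; intros; apply H; lia).
  assert (f n <= g n) by (apply H; lia). lra.
Qed.

Lemma sumR_nonneg n f : (forall i, (i < n)%nat -> 0 <= f i) -> 0 <= sumR n f.
Proof.
  intros H. replace 0 with (sumR n (fun _ => 0)) by (rewrite sumR_const; lra).
  apply sumR_le; auto.
Qed.

Lemma sumR_ge_term n f k : (forall i, (i < n)%nat -> 0 <= f i) -> (k < n)%nat ->
  f k <= sumR n f.
Proof.
  induction n; intros H Hk; [lia|]. simpl.
  destruct (Nat.eq_dec k n) as [->|Hne].
  - assert (0 <= sumR n f) by (apply sumR_nonneg; intros; apply H; lia). lra.
  - assert (f k <= sumR n f) by (apply IHn; [intros; apply H|]; lia).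
    assert (0 <= f n) by (apply H; lia). lra.
Qed.

Lemma sumR_pos n f k : (forall i, (i < n)%nat -> 0 <= f i) -> (k < n)%nat -> 0 < f k ->
  0 < sumR n f.
Proof. intros H Hk Hf. pose proof (sumR_ge_term n f k H Hk). lra. Qed.

Lemma sumR_abs n f : Rabs (sumR n f) <= sumR n (fun i => Rabs (f i)).
Proof.
  induction n; simpl.
  - rewrite Rabs_R0; lra.
  - eapply Rle_trans; [apply Rabs_triang|lra].
Qed.

Lemma sumR_le_const n f c : (forall i, (i < n)%nat -> f i <= c) -> sumR n f <= INR n * c.
Proof. intros H. rewrite <- sumR_const. apply sumR_le, H. Qed.

Definition barycenter (d : nat) (l : nat -> R) (v : nat -> pt) : pt :=
  fun i => sumR (S d) (fun j => l j * v j i).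

Lemma dot_barycenter d a (l : nat -> R) (v : nat -> pt) :
  dot d a (barycenter d l v) =
  sumR (S d) (fun j => l j * dot d a (v j)).
Proof.
  unfold dot, barycenter.
  rewrite (sumR_ext d _ (fun i => sumR (S d) (fun j => l j * (a i * v j i)))).
  - rewrite sumR_swap. apply sumR_ext. intros j _. apply sumR_scal.
  - intros i _. rewrite <- sumR_scal. apply sumR_ext. intros; ring.
Qed.

Lemma sumR_abs_eq0 n l c : c < 1 ->
  sumR n (fun j => Rabs (l j)) <= c * sumR n (fun j => Rabs (l j)) ->
  forall j, (j < n)%nat -> l j = 0.
Proof.
  intros Hc H j Hj.
  assert (Hge : 0 <= sumR n (fun j => Rabs (l j))) by (apply sumR_nonneg; intros; apply Rabs_pos).
  pose proof (sumR_ge_term n (fun j => Rabs (l j)) j ltac:(intros; apply Rabs_pos) Hj).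
  pose proof (Rabs_pos (l j)). destruct (Req_dec (l j) 0) as [|Hne]; [auto|].
  apply Rabs_no_R0 in Hne. nra.
Qed.

Lemma sumR_comb_dot_sub d a b l v :
  sumR (S d) (fun j => l j * (dot d a (v j) - b)) =
  dot d a (barycenter d l v) - b * sumR (S d) l.
Proof.
  rewrite dot_barycenter, <- sumR_scal, <- sumR_minus.
  apply sumR_ext. intros; ring.
Qed.

Definition straddles (d : nat) (u : nat -> R) : Prop :=
  ((exists j, (j <= d)%nat /\ 0 < u j) /\ (exists j, (j <= d)%nat /\ u j < 0)) \/
  (forall j, (j <= d)%nat -> u j = 0).

Lemma nonneg_pos_comb_eq0 d u w :
  (forall j, (j <= d)%nat -> 0 < w j) -> (forall j, (j <= d)%nat -> 0 <= u j) ->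
  sumR (S d) (fun j => w j * u j) = 0 -> forall j, (j <= d)%nat -> u j = 0.
Proof.
  intros Hw Hu Hz j Hj.
  destruct (Rle_lt_or_eq_dec _ _ (Hu j Hj)) as [Hlt|]; [exfalso|auto].
  assert (0 < sumR (S d) (fun j => w j * u j)); [|lra].
  apply sumR_pos with j; [|lia|].
  - intros i Hi. pose proof (Hw i ltac:(lia)). pose proof (Hu i ltac:(lia)). nra.
  - pose proof (Hw j Hj). nra.
Qed.

Lemma straddles_of_pos_comb d u w :
  (forall j, (j <= d)%nat -> 0 < w j) -> sumR (S d) (fun j => w j * u j) = 0 ->
  straddles d u.
Proof.
  intros Hw Hz.
  destruct (classic (exists j, (j <= d)%nat /\ u j < 0)) as [Hn|Hn].
  - destruct (classic (exists j, (j <= d)%nat /\ 0 < u j)) as [Hp|Hp]; [left; auto|right].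
    intros j Hj. enough (- u j = 0) by lra.
    apply (nonneg_pos_comb_eq0 d (fun j => - u j) w Hw); auto.
    + intros i Hi. enough (~ 0 < u i) by lra. intros Hlt. apply Hp. eauto.
    + rewrite (sumR_ext _ _ (fun j => -1 * (w j * u j))), sumR_scal, Hz by (intros; ring).
      ring.
  - right. apply (nonneg_pos_comb_eq0 d u w Hw); auto.
    intros j Hj. apply Rnot_lt_le. intros Hlt. apply Hn. eauto.
Qed.

Lemma pos_comb_of_straddles d u : straddles d u ->
  exists w, (forall j, (j <= d)%nat -> 0 < w j) /\ sumR (S d) (fun j => w j * u j) = 0.
Proof.
  intros [[[jp [Hjp Hp]] [jn [Hjn Hn]]] | H0].
  - assert (Hne : jp <> jn) by (intros ->; lra).
    set (o := fun j => if Nat.eqb j jp then 0 else if Nat.eqb j jn then 0 else 1).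
    set (R0 := sumR (S d) (fun j => o j * u j)).
    (* weights 1 off {jp, jn}; the two remaining weights cancel R0 *)
    set (p := (1 + Rabs R0 - R0) / u jp). set (q := (1 + Rabs R0) / - u jn).
    assert (Hpq : 0 < p /\ 0 < q).
    { pose proof (Rle_abs R0). pose proof (Rabs_pos R0).
      split; apply Rdiv_lt_0_compat; lra. }
    exists (fun j => o j + (if Nat.eqb j jp then p else 0) + (if Nat.eqb j jn then q else 0)).
    split.
    + intros j Hj. unfold o.
      destruct (Nat.eqb_spec j jp), (Nat.eqb_spec j jn); subst; try lia; lra.
    + rewrite (sumR_ext _ _ (fun j => o j * u j + (if Nat.eqb j jp then p * u jp else 0)
                                        + (if Nat.eqb j jn then q * u jn else 0))).
      * rewrite !sumR_plus, !sumR_indicator by lia. fold R0.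
        unfold p, q. field. lra.
      * intros j _. destruct (Nat.eqb_spec j jp), (Nat.eqb_spec j jn); subst; ring.
  - exists (fun _ => 1). split; [intros; lra|].
    rewrite (sumR_ext _ _ (fun _ => 0)), sumR_const by (intros j Hj; rewrite H0; [ring|lia]).
    ring.
Qed.

Lemma straddles_iff_neg d u j : (1 <= d)%nat -> (j <= d)%nat -> u j <> 0 ->
  (forall i, (i <= d)%nat -> i <> j -> 0 < u i) -> straddles d u <-> u j < 0.
Proof.
  intros Hd Hj Hnz Hpos. split.
  - intros [[_ [i [Hi Hneg]]] | Hz].
    + destruct (Nat.eq_dec i j) as [->|Hij]; auto. pose proof (Hpos i Hi Hij). lra.
    + exfalso. apply Hnz, Hz, Hj.
  - intros Hneg. left. split; [|exists j; auto].
    exists (if Nat.eqb j 0 then 1 else 0)%nat.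
    destruct (Nat.eqb_spec j 0); (split; [lia|apply Hpos; lia]).
Qed.

Lemma meets_interior_iff_straddles d v a b (h : pt -> Prop) :
  (forall x, h x <-> dot d a x = b) ->
  meets_interior d v h <-> straddles d (fun j => dot d a (v j) - b).
Proof.
  intros Hh. split.
  - intros [x [[l [Hl [Hs Hx]]] Hhx]]. apply (straddles_of_pos_comb d _ l Hl).
    rewrite sumR_comb_dot_sub, Hs. apply Hh in Hhx.
    assert (dot d a (barycenter d l v) = dot d a x).
    { apply sumR_ext. intros i Hi. unfold barycenter. rewrite Hx; auto. }
    lra.
  - intros Hst. destruct (pos_comb_of_straddles d _ Hst) as [w [Hw Hz]].
    set (W := sumR (S d) w).
    assert (HW : 0 < W).
    { apply sumR_pos with O; [intros i Hi; apply Rlt_le, Hw; lia | lia | apply Hw; lia]. }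
    exists (barycenter d (fun j => w j / W) v). split.
    + exists (fun j => w j / W). split; [|split]; auto.
      * intros j Hj. apply Rdiv_lt_0_compat; auto.
      * unfold Rdiv. rewrite (sumR_ext _ _ (fun j => / W * w j)), sumR_scal by (intros; ring).
        fold W. field. lra.
    + apply Hh.
      assert (Hz' : sumR (S d) (fun j => w j / W * (dot d a (v j) - b)) = 0).
      { unfold Rdiv. rewrite (sumR_ext _ _ (fun j => / W * (w j * (dot d a (v j) - b)))),
          sumR_scal, Hz by (intros; ring). ring. }
      rewrite sumR_comb_dot_sub in Hz'. unfold Rdiv in Hz'.
      rewrite (sumR_ext _ _ (fun j => / W * w j)), sumR_scal in Hz' by (intros; ring).
      fold W in Hz'. replace (/ W * W) with 1 in Hz' by (field; lra). lra.
Qed.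

(** * Sign patterns of affine functions *)

Definition sumL (I : list nat) (g : nat -> R) : R := fold_right (fun i acc => g i + acc) 0 I.

Lemma sumL_app I1 I2 g : sumL (I1 ++ I2) g = sumL I1 g + sumL I2 g.
Proof. induction I1; simpl; [lra|]. rewrite IHI1; lra. Qed.

Lemma sumL_plus I f g : sumL I (fun i => f i + g i) = sumL I f + sumL I g.
Proof. induction I; simpl; [lra|]. rewrite IHI; lra. Qed.

Lemma sumL_scal I c f : sumL I (fun i => c * f i) = c * sumL I f.
Proof. induction I; simpl; [lra|]. rewrite IHI; lra. Qed.

Lemma sumL_ext I f g : (forall i, In i I -> f i = g i) -> sumL I f = sumL I g.
Proof. induction I; simpl; intros H; auto. rewrite H, IHI; auto. Qed.

Lemma sumL_zero I : sumL I (fun _ => 0) = 0.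
Proof. induction I; simpl; [lra|]. rewrite IHI; lra. Qed.

Lemma sumL_indicator I k (x : pt) : NoDup I -> In k I ->
  sumL I (fun i => (if Nat.eqb i k then 1 else 0) * x i) = x k.
Proof.
  induction I as [|a I IHI]; simpl; intros Hn Hk; [tauto|]. inversion Hn; subst.
  destruct Hk as [<-|Hk].
  - rewrite Nat.eqb_refl, (sumL_ext _ _ (fun _ => 0)), sumL_zero; [lra|].
    intros i Hi. destruct (Nat.eqb_spec i a); subst; [tauto|lra].
  - rewrite IHI; auto. destruct (Nat.eqb_spec a k); subst; [tauto|lra].
Qed.

Definition affine_in (I : list nat) (f : pt -> R) : Prop :=
  exists (c : R) (a : pt), forall y, f y = c + sumL I (fun i => a i * y i).

Lemma affine_in_ext I f g : (forall y, f y = g y) -> affine_in I g -> affine_in I f.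
Proof. intros E [c [a H]]. exists c, a. intros y. rewrite E; auto. Qed.

Lemma affine_in_const I c : affine_in I (fun _ => c).
Proof.
  exists c, (fun _ => 0). intros y.
  rewrite (sumL_ext _ _ (fun _ => 0)), sumL_zero by (intros; ring). ring.
Qed.

Lemma affine_in_coord I k : NoDup I -> In k I -> affine_in I (fun y => y k).
Proof.
  intros. exists 0, (fun i => if Nat.eqb i k then 1 else 0). intros y.
  rewrite sumL_indicator; auto; ring.
Qed.

Lemma affine_in_plus I f g : affine_in I f -> affine_in I g -> affine_in I (fun y => f y + g y).
Proof.
  intros [c1 [a1 H1]] [c2 [a2 H2]]. exists (c1 + c2), (fun i => a1 i + a2 i). intros y.
  rewrite H1, H2, (sumL_ext _ (fun i => (a1 i + a2 i) * y i) (fun i => a1 i * y i + a2 i * y i)),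
    sumL_plus by (intros; ring).
  ring.
Qed.

Lemma affine_in_scal I c f : affine_in I f -> affine_in I (fun y => c * f y).
Proof.
  intros [c1 [a1 H1]]. exists (c * c1), (fun i => c * a1 i). intros y.
  rewrite H1, (sumL_ext _ (fun i => c * a1 i * y i) (fun i => c * (a1 i * y i))), sumL_scal
    by (intros; ring).
  ring.
Qed.

Lemma affine_in_sumR I n (F : nat -> pt -> R) : (forall i, (i < n)%nat -> affine_in I (F i)) ->
  affine_in I (fun y => sumR n (fun i => F i y)).
Proof.
  induction n; simpl; intros H.
  - apply affine_in_const.
  - apply affine_in_plus; [apply IHn; intros|]; apply H; lia.
Qed.

Lemma affine_in_comb I f y1 y2 t : affine_in I f ->
  f (fun i => (1 - t) * y1 i + t * y2 i) = (1 - t) * f y1 + t * f y2.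
Proof.
  intros [c [a H]]. rewrite !H.
  rewrite (sumL_ext _ _ (fun i => (1 - t) * (a i * y1 i) + t * (a i * y2 i))) by (intros; ring).
  rewrite sumL_plus, !sumL_scal. ring.
Qed.

Inductive sign := Neg | Zer | Pos.

Definition sign_eq_dec (x y : sign) : {x = y} + {x <> y}.
Proof. decide equality. Defined.

Definition sgn (r : R) : sign :=
  if Rlt_dec r 0 then Neg else if Rlt_dec 0 r then Pos else Zer.

Lemma sgn_Neg_iff r : sgn r = Neg <-> r < 0.
Proof.
  unfold sgn. destruct (Rlt_dec r 0), (Rlt_dec 0 r); split; intros; auto; lra || discriminate.
Qed.

Lemma sgn_Zer_iff r : sgn r = Zer <-> r = 0.
Proof.
  unfold sgn. destruct (Rlt_dec r 0), (Rlt_dec 0 r); split; intros; auto; lra || discriminate.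
Qed.

Lemma sgn_Pos_iff r : sgn r = Pos <-> 0 < r.
Proof.
  unfold sgn. destruct (Rlt_dec r 0), (Rlt_dec 0 r); split; intros; auto; lra || discriminate.
Qed.

Lemma sgn_comb a b t : 0 < t < 1 -> sgn a = sgn b -> sgn ((1 - t) * a + t * b) = sgn a.
Proof.
  intros Ht E. rewrite E. revert E. destruct (sgn b) eqn:Eb; intros E.
  - apply sgn_Neg_iff in E, Eb. apply sgn_Neg_iff. nra.
  - apply sgn_Zer_iff in E, Eb. apply sgn_Zer_iff. subst; ring.
  - apply sgn_Pos_iff in E, Eb. apply sgn_Pos_iff. nra.
Qed.

Definition pat (fs : list (pt -> R)) (y : pt) : list sign := map (fun f => sgn (f y)) fs.

Definition realized (fs : list (pt -> R)) (p : list sign) : Prop := exists y, pat fs y = p.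

Fixpoint sign_bound (N m : nat) : R :=
  match N, m with
  | O, _ => 1
  | S N', O => sign_bound N' O
  | S N', S m' => sign_bound N' (S m') + 2 * sign_bound N' m'
  end.

Lemma sign_bound_nonneg N m : 0 <= sign_bound N m.
Proof.
  revert m; induction N; intros m; simpl; [lra|].
  destruct m; [auto|]. pose proof (IHN (S m)); pose proof (IHN m). lra.
Qed.

Lemma sign_bound_le_S N m : sign_bound N m <= sign_bound (S N) m.
Proof. destruct m; simpl; [lra|]. pose proof (sign_bound_nonneg N m). lra. Qed.

Lemma pat_comb I fs y1 y2 t : Forall (affine_in I) fs -> 0 < t < 1 -> pat fs y1 = pat fs y2 ->
  pat fs (fun i => (1 - t) * y1 i + t * y2 i) = pat fs y1.
Proof.
  intros Hfs Ht. induction Hfs as [|f fs Hf Hfs IH]; simpl; auto.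
  intros E. injection E as E1 E2.
  rewrite (affine_in_comb I), sgn_comb, IH; auto.
Qed.

(* The intermediate value theorem along the segment [y1, y2], on which [pat fs] is constant. *)
Lemma pat_on_zero_set I g fs y1 y2 : affine_in I g -> Forall (affine_in I) fs ->
  0 < g y1 -> g y2 < 0 -> pat fs y1 = pat fs y2 ->
  exists z, g z = 0 /\ pat fs z = pat fs y1.
Proof.
  intros Hg Hfs H1 H2 E. set (t := g y1 / (g y1 - g y2)).
  assert (Ht : 0 < t < 1).
  { unfold t. split; [apply Rdiv_lt_0_compat; lra|].
    apply Rmult_lt_reg_r with (g y1 - g y2); [lra|].
    unfold Rdiv. rewrite Rmult_assoc, Rinv_l; lra. }
  exists (fun i => (1 - t) * y1 i + t * y2 i). split.
  - rewrite (affine_in_comb I); auto. unfold t. field. lra.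
  - apply pat_comb with I; auto.
Qed.

Section Elimination.

Variables (l1 l2 : list nat) (k : nat) (cg : R) (ag : pt).
Let I := l1 ++ k :: l2.
Let I' := l1 ++ l2.

Hypothesis HI : NoDup I.
Hypothesis Hak : ag k <> 0.

(* Substitutes for [y k] the value that puts [y] on the hyperplane [cg + sum_I ag_i y_i = 0]. *)
Definition eliminate (y : pt) : pt :=
  fun j => if Nat.eqb j k then - (cg + sumL I' (fun i => ag i * y i)) / ag k else y j.

Lemma sumL_split g : sumL I g = g k + sumL I' g.
Proof. unfold I, I'. rewrite !sumL_app. simpl. ring. Qed.

Lemma sumL_eliminate y g : sumL I' (fun i => g i * eliminate y i) = sumL I' (fun i => g i * y i).
Proof.
  apply sumL_ext. intros i Hi. unfold eliminate.
  destruct (Nat.eqb_spec i k) as [->|]; [|auto].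
  exfalso. apply (NoDup_remove_2 _ _ _ HI). auto.
Qed.

Lemma affine_in_eliminate f : affine_in I f -> affine_in I' (fun y => f (eliminate y)).
Proof.
  intros [c [b H]]. exists (c - b k * cg / ag k), (fun i => b i - b k * ag i / ag k).
  intros y. rewrite H, sumL_split, sumL_eliminate. unfold eliminate at 1. rewrite Nat.eqb_refl.
  rewrite (sumL_ext I' (fun i => (b i - b k * ag i / ag k) * y i)
             (fun i => b i * y i + (- (b k / ag k)) * (ag i * y i))) by (intros; field; auto).
  rewrite sumL_plus, sumL_scal. field. auto.
Qed.

Lemma eliminate_id_on_zero_set y f : cg + sumL I (fun i => ag i * y i) = 0 -> affine_in I f ->
  f (eliminate y) = f y.
Proof.
  intros Hz [c [b H]]. rewrite !H. f_equal. apply sumL_ext. intros i _.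
  unfold eliminate. destruct (Nat.eqb_spec i k) as [->|]; [|auto]. f_equal.
  rewrite sumL_split in Hz. field_simplify_eq; auto. lra.
Qed.

End Elimination.

Definition has_head (s : sign) (p : list sign) : bool :=
  match p with s' :: _ => if sign_eq_dec s' s then true else false | [] => false end.

Definition tails (s : sign) (L : list (list sign)) : list (list sign) :=
  map (@tl sign) (filter (has_head s) L).

Lemma tails_NoDup s L : NoDup L -> NoDup (tails s L).
Proof.
  intros HL. apply NoDup_map_NoDup_ForallPairs; [|apply NoDup_filter; auto].
  intros x y Hx Hy E. apply filter_In in Hx, Hy. destruct Hx as [_ Hx], Hy as [_ Hy].
  destruct x as [|a x]; [discriminate|]. destruct y as [|b y]; [discriminate|].
  simpl in *. destruct (sign_eq_dec a s), (sign_eq_dec b s); try discriminate. subst; auto.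
Qed.

Lemma length_tails L : (forall p, In p L -> p <> []) ->
  length L = (length (tails Zer L) + length (tails Pos L) + length (tails Neg L))%nat.
Proof.
  unfold tails. induction L as [|[|s p] L IHL]; intros H; simpl; auto.
  - exfalso. apply (H []); simpl; auto.
  - rewrite IHL by (intros; apply H; simpl; auto). destruct s; simpl; lia.
Qed.

Lemma tails_realized g fs L s t : (forall p, In p L -> realized (g :: fs) p) ->
  In t (tails s L) -> exists y, sgn (g y) = s /\ pat fs y = t.
Proof.
  intros HR Ht. apply in_map_iff in Ht. destruct Ht as [p [<- Hp]].
  apply filter_In in Hp. destruct Hp as [Hp Hs]. destruct (HR p Hp) as [y <-].
  exists y. simpl in *. destruct (sign_eq_dec (sgn (g y)) s); [auto|discriminate].
Qed.

Lemma NoDup_app_filter_notin {A} (dec : forall x y : A, {x = y} + {x <> y}) (l1 l2 : list A) :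
  NoDup l1 -> NoDup l2 ->
  NoDup (l1 ++ filter (fun x => negb (if in_dec dec x l1 then true else false)) l2).
Proof.
  intros H1 H2. apply NoDup_app; [auto|apply NoDup_filter; auto|].
  intros x Hx Hx'. apply filter_In in Hx'. destruct Hx' as [_ Hx'].
  destruct (in_dec dec x l1); [discriminate|tauto].
Qed.

Definition sign_bound_holds (N : nat) : Prop :=
  forall fs I L, length fs = N -> NoDup I -> Forall (affine_in I) fs -> NoDup L ->
    (forall p, In p L -> realized fs p) -> INR (length L) <= sign_bound N (length I).

Lemma sign_bound_holds_O : sign_bound_holds O.
Proof.
  intros [|] I L Hlen _ _ HL HR; [|discriminate]. simpl.
  assert (Hle : (length L <= 1)%nat).
  { destruct L as [|p [|q L]]; simpl; try lia. inversion HL as [|? ? Hp]; subst.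
    exfalso. apply Hp. destruct (HR p), (HR q); simpl in *; subst; simpl; auto. }
  apply le_INR in Hle. simpl in Hle. lra.
Qed.

Section Step.

Variable N : nat.
Hypothesis IH : sign_bound_holds N.

Lemma sign_bound_step_const g fs I L :
  length fs = N -> NoDup I -> Forall (affine_in I) fs -> NoDup L ->
  (forall p, In p L -> realized (g :: fs) p) -> (forall y1 y2, g y1 = g y2) ->
  INR (length L) <= sign_bound (S N) (length I).
Proof.
  intros Hlen HI Hfs HL HR Hc.
  rewrite <- (length_map (@tl sign) L).
  eapply Rle_trans; [|apply sign_bound_le_S].
  apply (IH fs); auto.
  - apply NoDup_map_NoDup_ForallPairs; auto. intros x y Hx Hy E.
    destruct (HR x Hx) as [y1 <-], (HR y Hy) as [y2 <-]. simpl in *.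
    rewrite (Hc y1 y2), E. reflexivity.
  - intros t Ht. apply in_map_iff in Ht. destruct Ht as [p [<- Hp]].
    destruct (HR p Hp) as [y <-]. exists y; reflexivity.
Qed.

(* The zero set of [g] is a copy of R^(m-1); a pattern of [fs] realized both where [g > 0] and
   where [g < 0] is also realized on it.  This gives F(N, m) + 2 F(N, m-1). *)
Lemma sign_bound_step_cut g fs l1 l2 k cg ag L :
  length fs = N -> NoDup (l1 ++ k :: l2) -> Forall (affine_in (l1 ++ k :: l2)) fs -> NoDup L ->
  (forall p, In p L -> realized (g :: fs) p) ->
  (forall y, g y = cg + sumL (l1 ++ k :: l2) (fun i => ag i * y i)) -> ag k <> 0 ->
  INR (length L) <= sign_bound (S N) (length (l1 ++ k :: l2)).
Proof.
  intros Hlen HI Hfs HL HR Hg Hak.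
  set (I := l1 ++ k :: l2) in *. set (I' := l1 ++ l2).
  assert (HlI : length I = S (length I')) by (unfold I, I'; rewrite !length_app; simpl; lia).
  assert (HI' : NoDup I') by apply (NoDup_remove_1 _ _ _ HI).
  assert (Hgaff : affine_in I g) by (exists cg, ag; auto).
  set (fs' := map (fun f y => f (eliminate l1 l2 k cg ag y)) fs).
  assert (Hfs' : Forall (affine_in I') fs').
  { apply Forall_map. eapply Forall_impl; [|exact Hfs]. intros f Hf.
    apply affine_in_eliminate; auto. }
  assert (Hlen' : length fs' = N) by (unfold fs'; rewrite length_map; auto).
  assert (Hzero : forall y, g y = 0 -> realized fs' (pat fs y)).
  { intros y Hy. exists y. unfold fs', pat. rewrite map_map. apply map_ext_in. intros f Hf.
    rewrite eliminate_id_on_zero_set; auto; [rewrite <- Hg; auto|].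
    rewrite Forall_forall in Hfs; auto. }
  set (TZ := tails Zer L). set (TP := tails Pos L). set (TN := tails Neg L).
  set (inTP := fun t => if in_dec (list_eq_dec sign_eq_dec) t TP then true else false).
  assert (BZ : INR (length TZ) <= sign_bound N (length I')).
  { apply (IH fs'); [auto | auto | auto | apply tails_NoDup, HL |]. intros t Ht.
    destruct (tails_realized _ _ _ _ _ HR Ht) as [y [Hy <-]]. apply Hzero, sgn_Zer_iff; auto. }
  assert (BPN : INR (length (TP ++ filter (fun t => negb (inTP t)) TN)) <= sign_bound N (length I)).
  { apply (IH fs); auto.
    - apply NoDup_app_filter_notin; apply tails_NoDup; auto.
    - intros t Ht. apply in_app_or in Ht.
      destruct Ht as [Ht|Ht]; [|apply filter_In in Ht as [Ht _]];
        destruct (tails_realized _ _ _ _ _ HR Ht) as [y [_ <-]]; exists y; auto. }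
  assert (BNP : INR (length (filter inTP TN)) <= sign_bound N (length I')).
  { apply (IH fs'); [auto | auto | auto | apply NoDup_filter, tails_NoDup, HL |].
    intros t Ht. apply filter_In in Ht. destruct Ht as [Ht Hin]. unfold inTP in Hin.
    destruct (in_dec _ t TP) as [HtP|]; [|discriminate].
    destruct (tails_realized _ _ _ _ _ HR Ht) as [y2 [Hy2 <-]].
    destruct (tails_realized _ _ _ _ _ HR HtP) as [y1 [Hy1 Ht1]].
    apply sgn_Neg_iff in Hy2. apply sgn_Pos_iff in Hy1.
    destruct (pat_on_zero_set I g fs y1 y2) as [z [Hz Hpz]]; auto.
    rewrite <- Ht1, <- Hpz. apply Hzero; auto. }
  rewrite length_tails by (intros p Hp; destruct (HR p Hp) as [y <-]; discriminate).
  fold TZ TP TN. rewrite <- (filter_length inTP TN), length_app in *.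
  rewrite HlI in *. simpl sign_bound. rewrite !plus_INR in *. lra.
Qed.

End Step.

Theorem sign_patterns_bound N : sign_bound_holds N.
Proof.
  induction N; [apply sign_bound_holds_O|].
  intros [|g fs] I L Hlen HI Hf HL HR; [discriminate|]. injection Hlen as Hlen.
  inversion Hf as [|? ? [cg [ag Hg]] Hfs]; subst.
  destruct (classic (exists k, In k I /\ ag k <> 0)) as [[k [Hk Hak]] | Hno].
  - destruct (in_split _ _ Hk) as [l1 [l2 ->]].
    apply (sign_bound_step_cut _ IHN g fs l1 l2 k cg ag); auto.
  - apply (sign_bound_step_const _ IHN g fs I L); auto.
    intros y1 y2. rewrite !Hg. f_equal. apply sumL_ext. intros i Hi.
    destruct (Req_dec (ag i) 0) as [->|]; [ring|]. exfalso; eauto.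
Qed.

(** * The upper bound *)

Lemma sign_bound_mul_pow_le N m x : 0 < x <= 1 -> sign_bound N m * x ^ m <= (1 + 2 * x) ^ N.
Proof.
  intros Hx. revert m; induction N; intros m; simpl.
  - pose proof (pow_incr x 1 m). rewrite pow1 in *. lra.
  - destruct m as [|m].
    + specialize (IHN O). simpl in *. pose proof (pow_R1_Rle (1 + 2 * x) N). nra.
    + pose proof (IHN (S m)). pose proof (IHN m). simpl in *.
      assert (0 < x ^ m) by (apply pow_lt; lra). nra.
Qed.

Lemma ln_le x y : 0 < x -> x <= y -> ln x <= ln y.
Proof. intros Hx [H|H]; [apply Rlt_le, ln_increasing; auto | subst; lra]. Qed.

Lemma ln_1_plus_le y : 0 < y -> ln (1 + y) <= y.
Proof. intros Hy. rewrite <- (ln_exp y) at 2. apply ln_le; [lra|apply exp_ineq1_le]. Qed.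

(* [sign_bound_mul_pow_le] at [x = 1 / (20 (d + 1))], chosen so that [n (d + 1) 2 x = n / 10]. *)
Lemma ln_bound_of_patterns (n d : nat) :
  2 ^ n <= sign_bound (n * (d + 1)) (d * (d + 1)) ->
  INR n * (ln 2 - / 10) <= INR d * (INR d + 1) * ln (20 * (INR d + 1)).
Proof.
  intros HF. pose proof (pos_INR d) as Hd. pose proof (pos_INR n) as Hn.
  set (x := / (20 * (INR d + 1))).
  assert (Hx : 0 < x <= 1).
  { unfold x. split; [apply Rinv_0_lt_compat; lra|].
    rewrite <- Rinv_1. apply Rinv_le_contravar; lra. }
  assert (H : 2 ^ n * x ^ (d * (d + 1)) <= (1 + 2 * x) ^ (n * (d + 1))).
  { eapply Rle_trans; [|apply sign_bound_mul_pow_le; exact Hx].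
    apply Rmult_le_compat_r; [apply pow_le|]; lra. }
  apply ln_le in H; [|apply Rmult_lt_0_compat; apply pow_lt; lra].
  rewrite ln_mult, !ln_pow in H by (try apply pow_lt; lra).
  assert (Hlx : ln x = - ln (20 * (INR d + 1))) by (unfold x; apply ln_Rinv; lra).
  assert (H2x : ln (1 + 2 * x) <= 2 * x) by (apply ln_1_plus_le; lra).
  assert (E : INR n * (INR d + 1) * (2 * x) = INR n / 10) by (unfold x; field; lra).
  rewrite !mult_INR, !plus_INR, Hlx in H. simpl (INR 1) in H.
  assert (INR n * (INR d + 1) * ln (1 + 2 * x) <= INR n * (INR d + 1) * (2 * x))
    by (apply Rmult_le_compat_l; nra).
  lra.
Qed.

Lemma ln_estimate r : 9 <= r ->
  r * (r + 1) * ln (20 * (r + 1)) * ln 2 <= 5 * r ^ 2 * ln r * (ln 2 - / 10).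
Proof.
  intros Hr. pose proof ln_lt_2 as Hl2. set (a := ln 2) in *. set (L := ln r).
  assert (HL20 : ln (20 * (r + 1)) <= 6 * a + L).
  { replace (6 * a) with (INR 6 * ln 2) by (simpl; unfold a; ring).
    unfold L. rewrite <- ln_pow, <- ln_mult by (simpl; lra). apply ln_le; simpl; lra. }
  assert (HL : 3 * a <= L).
  { replace (3 * a) with (INR 3 * ln 2) by (simpl; unfold a; ring).
    rewrite <- ln_pow by lra. apply ln_le; simpl; lra. }
  assert (Hkey : (10 / 9) * (6 * a + L) * a <= 5 * L * (a - / 10)).
  { assert (L * (35 * a / 9 - / 2) >= 3 * a * (35 * a / 9 - / 2)) by nra. nra. }
  assert (r * (r + 1) * ln (20 * (r + 1)) * a <= r * (r + 1) * (6 * a + L) * a)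
    by (apply Rmult_le_compat_r; [lra|]; apply Rmult_le_compat_l; nra).
  assert (0 <= (6 * a + L) * a) by nra.
  assert (r * (r + 1) * ((6 * a + L) * a) <= r * (10 / 9 * r) * ((6 * a + L) * a))
    by (apply Rmult_le_compat_r; [|apply Rmult_le_compat_l]; lra).
  assert (r * (10 / 9 * r) * ((6 * a + L) * a) <= r * r * (5 * L * (a - / 10)))
    by (replace (r * (10 / 9 * r) * ((6 * a + L) * a)) with (r * r * (10 / 9 * (6 * a + L) * a))
          by ring; apply Rmult_le_compat_l; nra).
  simpl. nra.
Qed.

Lemma vc_bound_of_patterns (n d : nat) : (9 <= d)%nat ->
  2 ^ n <= sign_bound (n * (d + 1)) (d * (d + 1)) ->
  INR n <= 5 * INR d ^ 2 * log2 (INR d).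
Proof.
  intros Hd HF. apply ln_bound_of_patterns in HF.
  assert (Hr : 9 <= INR d) by (replace 9 with (INR 9) by (simpl; lra); apply le_INR; auto).
  pose proof (ln_estimate _ Hr) as Hest. pose proof ln_lt_2 as Hl2.
  assert (HK : INR n * ln 2 * (ln 2 - / 10) <= 5 * INR d ^ 2 * ln (INR d) * (ln 2 - / 10))
    by (pose proof (pos_INR n); nra).
  apply Rmult_le_reg_r in HK; [|lra].
  unfold log2. apply Rmult_le_reg_r with (ln 2); [lra|].
  replace (5 * INR d ^ 2 * (ln (INR d) / ln 2) * ln 2) with (5 * INR d ^ 2 * ln (INR d))
    by (field; lra).
  exact HK.
Qed.

Fixpoint all_bool_lists (n : nat) : list (list bool) :=
  match n with
  | O => [[]]
  | S n => map (cons true) (all_bool_lists n) ++ map (cons false) (all_bool_lists n)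
  end.

Lemma length_all_bool_lists n : length (all_bool_lists n) = (2 ^ n)%nat.
Proof. induction n; simpl; auto. rewrite length_app, !length_map, IHn. lia. Qed.

Lemma in_all_bool_lists_length n s : In s (all_bool_lists n) -> length s = n.
Proof.
  revert s; induction n; simpl; intros s H.
  - destruct H as [<-|[]]; auto.
  - apply in_app_or in H.
    destruct H as [H|H]; apply in_map_iff in H; destruct H as [t [<- Ht]]; simpl; auto.
Qed.

Lemma all_bool_lists_NoDup n : NoDup (all_bool_lists n).
Proof.
  induction n; simpl; [repeat constructor; simpl; tauto|].
  apply NoDup_app;
    try (apply NoDup_map_NoDup_ForallPairs; auto; intros ? ? _ _ E; injection E; auto).
  intros a H1 H2. apply in_map_iff in H1, H2.
  destruct H1 as [? [<- _]], H2 as [? [E _]]. discriminate.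
Qed.

Lemma straddles_sgn d u w : (forall j, (j <= d)%nat -> sgn (u j) = sgn (w j)) ->
  straddles d u -> straddles d w.
Proof.
  intros E [[[j1 [H1 H1']] [j2 [H2 H2']]]|H].
  - left. split; [exists j1|exists j2]; split; auto.
    + apply sgn_Pos_iff. rewrite <- E, sgn_Pos_iff; auto.
    + apply sgn_Neg_iff. rewrite <- E, sgn_Neg_iff; auto.
  - right. intros j Hj. apply sgn_Zer_iff. rewrite <- E, sgn_Zer_iff; auto.
Qed.

(* The [d + 1] vertices of a simplex, concatenated into one point of R^((d+1) d). *)
Definition pack (d : nat) (v : nat -> pt) : pt := fun idx => v (idx / d)%nat (idx mod d)%nat.

Definition vertex_dot (d : nat) (a : pt) (b : R) (j : nat) (y : pt) : R :=
  dot d a (fun i => y (j * d + i)%nat) - b.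

Lemma vertex_dot_pack d a b j v : vertex_dot d a b j (pack d v) = dot d a (v j) - b.
Proof.
  unfold vertex_dot, pack. f_equal. apply sumR_ext. intros i Hi. do 2 f_equal.
  - rewrite Nat.div_add_l, Nat.div_small; lia.
  - rewrite Nat.add_comm, Nat.Div0.mod_add, Nat.mod_small; lia.
Qed.

Lemma affine_in_vertex_dot d a b j : (j <= d)%nat ->
  affine_in (seq 0 (S d * d)) (vertex_dot d a b j).
Proof.
  intros Hj. apply affine_in_ext with
    (fun y => sumR d (fun i => a i * y (j * d + i)%nat) + (-1) * b);
    [intros y; unfold vertex_dot, dot; ring|].
  apply affine_in_plus; [|apply affine_in_scal, affine_in_const].
  apply affine_in_sumR. intros i Hi. apply affine_in_scal, affine_in_coord;
    [apply seq_NoDup | apply in_seq; nia].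
Qed.

(* The subset cut out by the simplex [V s] is read off the sign pattern of the [n (d + 1)]
   affine functions [vertex_dot] at [pack d (V s)], so distinct subsets give distinct patterns. *)
Lemma two_pow_le_sign_bound d n (A : nat -> pt) (B : nat -> R) (V : list bool -> nat -> pt) :
  (forall s k, (k < n)%nat ->
     straddles d (fun j => dot d (A k) (V s j) - B k) <-> nth k s false = true) ->
  2 ^ n <= sign_bound (n * (d + 1)) (d * (d + 1)).
Proof.
  intros HV.
  set (kjs := list_prod (seq 0 n) (seq 0 (S d))).
  set (fs := map (fun kj => vertex_dot d (A (fst kj)) (B (fst kj)) (snd kj)) kjs).
  assert (Hpat : forall s, pat fs (pack d (V s)) =
            map (fun kj => sgn (dot d (A (fst kj)) (V s (snd kj)) - B (fst kj))) kjs).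
  { intros s. unfold pat, fs. rewrite map_map. apply map_ext. intros kj.
    rewrite vertex_dot_pack. reflexivity. }
  assert (Hinj : forall s s', In s (all_bool_lists n) -> In s' (all_bool_lists n) ->
            pat fs (pack d (V s)) = pat fs (pack d (V s')) -> s = s').
  { intros s s' Hs Hs' E. rewrite !Hpat in E.
    apply in_all_bool_lists_length in Hs, Hs'.
    apply nth_ext with false false; [congruence|]. intros k Hk. rewrite Hs in Hk.
    assert (Hsg : forall j, (j <= d)%nat ->
              sgn (dot d (A k) (V s j) - B k) = sgn (dot d (A k) (V s' j) - B k)).
    { intros j Hj. apply (ext_in_map E (k, j)). apply in_prod; apply in_seq; lia. }
    apply Bool.eq_iff_eq_true. rewrite <- !HV by lia.
    split; apply straddles_sgn; intros j Hj; rewrite Hsg; auto. }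
  pose proof (sign_patterns_bound _ fs (seq 0 (S d * d))
                (map (fun s => pat fs (pack d (V s))) (all_bool_lists n)) eq_refl) as H.
  rewrite length_map, length_all_bool_lists, pow_INR, length_seq in H.
  unfold fs in H. rewrite length_map in H. unfold kjs in H. rewrite length_prod, !length_seq in H.
  replace (n * (d + 1))%nat with (n * S d)%nat by lia.
  replace (d * (d + 1))%nat with (S d * d)%nat by lia.
  apply H.
  - apply seq_NoDup.
  - apply Forall_forall. intros f Hf. apply in_map_iff in Hf.
    destruct Hf as [[k j] [<- Hkj]]. apply in_prod_iff in Hkj. destruct Hkj as [_ Hj].
    apply in_seq in Hj. apply affine_in_vertex_dot. simpl; lia.
  - apply NoDup_map_NoDup_ForallPairs; [exact Hinj | apply all_bool_lists_NoDup].
  - intros p Hp. apply in_map_iff in Hp. destruct Hp as [s [<- _]]. eexists; reflexivity.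
Qed.

Lemma vc_upper d (H : list (pt -> Prop)) : (9 <= d)%nat -> shattered d H ->
  INR (length H) <= 5 * INR d ^ 2 * log2 (INR d).
Proof.
  intros Hd [Hhyp [_ Hsh]]. set (n := length H). set (hk := fun k => nth k H (fun _ => False)).
  destruct (choice (fun k (ab : pt * R) =>
              (k < n)%nat -> forall x, hk k x <-> dot d (fst ab) x = snd ab)) as [AB HAB].
  { intros k. destruct (Nat.lt_ge_cases k n) as [Hk|Hk].
    - destruct (Hhyp k Hk) as [a [b [_ Hab]]]. exists (a, b). auto.
    - exists (fun _ => 0, 0). lia. }
  destruct (choice (fun (s : list bool) (v : nat -> pt) =>
              forall k, (k < n)%nat -> meets_interior d v (hk k) <-> nth k s false = true))
    as [V HV].
  { intros s. destruct (Hsh (fun k => nth k s false = true)) as [v [_ Hv]]. exists v. exact Hv. }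
  apply vc_bound_of_patterns; auto.
  apply (two_pow_le_sign_bound d n (fun k => fst (AB k)) (fun k => snd (AB k)) V).
  intros s k Hk. rewrite <- (HV s k Hk). symmetry. apply meets_interior_iff_straddles, HAB, Hk.
Qed.

(** * The lower bound *)

Definition ind (t i : nat) : R := if Nat.eqb i t then 1 else 0.

Lemma sumR_ind_mul n t (x : nat -> R) : (t < n)%nat -> sumR n (fun i => ind t i * x i) = x t.
Proof.
  intros Ht. rewrite <- (sumR_indicator n t (x t) Ht). apply sumR_ext.
  intros i _. unfold ind. destruct (Nat.eqb_spec i t) as [->|]; ring.
Qed.

Definition base_vertex (j : nat) : pt :=
  match j with O => fun _ => -1 | S m => ind m end.

(* The hyperplane (j, t) passes through base vertex j with normal e_t (j = 0) or
   e_t / 2 - e_m (j = m + 1); all other base vertices lie strictly on its positive side. *)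
Definition normal (j t : nat) : pt :=
  match j with O => ind t | S m => fun i => / 2 * ind t i - ind m i end.

Definition normal_val (j t : nat) (x : pt) : R :=
  match j with O => x t | S m => / 2 * x t - x m end.

Lemma dot_normal d j t x : (t < d)%nat -> (j <= d)%nat -> dot d (normal j t) x = normal_val j t x.
Proof.
  intros Ht Hj. unfold dot. destruct j as [|m]; simpl.
  - apply sumR_ind_mul; auto.
  - rewrite (sumR_ext _ _ (fun i => / 2 * (ind t i * x i) - ind m i * x i)) by (intros; ring).
    rewrite sumR_minus, sumR_scal, !sumR_ind_mul by lia. ring.
Qed.

Definition hyp (d k : nat) : pt -> Prop :=
  fun x => dot d (normal (k / d) (k mod d)) x =
           dot d (normal (k / d) (k mod d)) (base_vertex (k / d)).

Definition side (sel : nat -> Prop) (k : nat) : R :=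
  if excluded_middle_informative (sel k) then -1 else 1.

Lemma side_cases sel k : side sel k = 1 \/ side sel k = -1.
Proof. unfold side. destruct excluded_middle_informative; auto. Qed.

Definition eps (d : nat) : R := / (100 * INR d).

Lemma eps_pos d : (1 <= d)%nat -> 0 < eps d /\ INR d * eps d = / 100.
Proof.
  intros Hd. assert (1 <= INR d) by (apply (le_INR 1); auto).
  unfold eps. split; [apply Rinv_0_lt_compat; lra | field; lra].
Qed.

(* Vertex j is moved so that [normal_val j t] changes by a positive multiple of
   [side sel (j d + t)], independently for each t < d. *)
Definition shift (sel : nat -> Prop) (d j : nat) : pt :=
  match j with
  | O => fun t => eps d * side sel t
  | S m => fun t =>
      if Nat.eqb t m then - eps d * side sel (j * d + m)
      else 2 * eps d * (side sel (j * d + t) - side sel (j * d + m))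
  end.

Definition vert (sel : nat -> Prop) (d j : nat) : pt := fun i => base_vertex j i + shift sel d j i.

Lemma shift_bound sel d j t : (1 <= d)%nat -> - (4 * eps d) <= shift sel d j t <= 4 * eps d.
Proof.
  intros Hd. destruct (eps_pos d Hd) as [He _].
  destruct j as [|m]; simpl.
  - destruct (side_cases sel t) as [E|E]; rewrite E; lra.
  - destruct (side_cases sel (d + m * d + m)) as [E|E], (side_cases sel (d + m * d + t)) as [E'|E'];
      destruct (Nat.eqb t m); rewrite ?E, ?E'; lra.
Qed.

Definition offset (sel : nat -> Prop) (d j t i : nat) : R :=
  normal_val j t (vert sel d i) - normal_val j t (base_vertex j).

Lemma offset_own sel d j t : (1 <= d)%nat -> (t < d)%nat ->
  exists c, 0 < c /\ offset sel d j t j = c * side sel (j * d + t).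
Proof.
  intros Hd Ht. destruct (eps_pos d Hd) as [He _]. unfold offset, vert. destruct j as [|m]; simpl.
  - exists (eps d). split; auto. ring.
  - rewrite Nat.eqb_refl. destruct (Nat.eqb_spec t m) as [->|].
    + exists (eps d / 2). split; [lra|]. field.
    + exists (eps d). split; auto. field.
Qed.

Lemma offset_other sel d j t i : (1 <= d)%nat -> (t < d)%nat -> (i <= d)%nat -> i <> j ->
  0 < offset sel d j t i.
Proof.
  intros Hd Ht Hi Hij. destruct (eps_pos d Hd) as [He He'].
  assert (1 <= INR d) by (apply (le_INR 1); auto).
  assert (eps d <= / 100) by nra.
  pose proof (shift_bound sel d i t Hd) as Bt.
  unfold offset, vert. destruct j as [|m], i as [|m']; cbn [normal_val base_vertex]; try lia.
  - unfold ind. destruct (Nat.eqb t m'); lra.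
  - pose proof (shift_bound sel d 0 m Hd) as Bm.
    unfold ind. rewrite Nat.eqb_refl. destruct (Nat.eqb t m); lra.
  - pose proof (shift_bound sel d (S m') m Hd) as Bm.
    unfold ind. rewrite Nat.eqb_refl. destruct (Nat.eqb_spec m m'); [lia|].
    destruct (Nat.eqb t m), (Nat.eqb t m'); lra.
Qed.

Lemma vert_affinely_independent sel d : (1 <= d)%nat -> affinely_independent d (vert sel d).
Proof.
  intros Hd l Hsum Hcoord. destruct (eps_pos d Hd) as [He He'].
  set (Sig := sumR (S d) (fun j => Rabs (l j))).
  set (r := fun i => sumR (S d) (fun j => l j * shift sel d j i)).
  assert (Hr : forall i, Rabs (r i) <= 4 * eps d * Sig).
  { intros i. eapply Rle_trans; [apply sumR_abs|]. unfold Sig. rewrite <- sumR_scal.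
    apply sumR_le. intros j _. rewrite Rabs_mult.
    pose proof (Rabs_le _ _ (shift_bound sel d j i Hd)). pose proof (Rabs_pos (l j)). nra. }
  (* Coordinate i of the base simplex combination is l (S i) - l O; [r i] is the error. *)
  assert (Hl : forall i, (i < d)%nat -> l (S i) = l O - r i).
  { intros i Hi. specialize (Hcoord i Hi). unfold vert in Hcoord.
    rewrite (sumR_ext _ _ (fun j => l j * base_vertex j i + l j * shift sel d j i)),
      sumR_plus, sumR_succ_l in Hcoord by (intros; ring).
    cbn [base_vertex] in Hcoord.
    rewrite (sumR_ext d _ (fun j => ind i j * l (S j))), sumR_ind_mul in Hcoord by
      (auto; intros j _; unfold ind; destruct (Nat.eqb_spec i j), (Nat.eqb_spec j i); lia || ring).
    fold (r i) in Hcoord. lra. }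
  assert (Hl0 : (INR d + 1) * l O = sumR d r).
  { rewrite sumR_succ_l, (sumR_ext d _ (fun m => l O - r m)), sumR_minus, sumR_const in Hsum
      by (intros; apply Hl; auto).
    lra. }
  assert (HSig : Sig <= 8 * (INR d * eps d) * Sig).
  { assert (Habs0 : (INR d + 1) * Rabs (l O) <= INR d * (4 * eps d * Sig)).
    { rewrite <- (Rabs_pos_eq (INR d + 1)), <- Rabs_mult, Hl0 by (pose proof (pos_INR d); lra).
      eapply Rle_trans; [apply sumR_abs | apply sumR_le_const; intros; apply Hr]. }
    assert (sumR d (fun m => Rabs (l (S m))) <= INR d * (Rabs (l O) + 4 * eps d * Sig)).
    { apply sumR_le_const. intros m Hm. rewrite Hl by auto. unfold Rminus.
      eapply Rle_trans; [apply Rabs_triang|]. rewrite Rabs_Ropp. pose proof (Hr m). lra. }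
    unfold Sig at 1. rewrite sumR_succ_l. nra. }
  intros j Hj. apply (sumR_abs_eq0 (S d) l (8 * (INR d * eps d))); auto; [|lia].
  rewrite He'. lra.
Qed.

Lemma normal_diag_neq0 j t : normal j t t <> 0.
Proof.
  unfold normal, ind. destruct j as [|m]; rewrite ?Nat.eqb_refl; [lra|].
  destruct (Nat.eqb t m); lra.
Qed.

Lemma hyp_is_hyperplane d k : (1 <= d)%nat -> is_hyperplane d (hyp d k).
Proof.
  intros Hd. eexists _, _. split; [|intros x; unfold hyp; reflexivity].
  exists (k mod d)%nat. split; [apply Nat.mod_upper_bound; lia | apply normal_diag_neq0].
Qed.

Lemma meets_hyp_iff sel d k : (1 <= d)%nat -> (k < d * (d + 1))%nat ->
  meets_interior d (vert sel d) (hyp d k) <-> sel k.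
Proof.
  intros Hd Hk.
  assert (Hj : (k / d <= d)%nat).
  { enough (k / d < d + 1)%nat by lia. apply Nat.Div0.div_lt_upper_bound. lia. }
  assert (Ht : (k mod d < d)%nat) by (apply Nat.mod_upper_bound; lia).
  assert (Ek : k = (k / d * d + k mod d)%nat) by (rewrite Nat.mul_comm; apply Nat.div_mod; lia).
  unfold hyp. set (j := (k / d)%nat) in *. set (t := (k mod d)%nat) in *.
  rewrite meets_interior_iff_straddles by (intros; reflexivity).
  assert (Hu : forall i, (i <= d)%nat ->
            dot d (normal j t) (vert sel d i) - dot d (normal j t) (base_vertex j) =
            offset sel d j t i) by (intros; unfold offset; rewrite !dot_normal; auto).
  destruct (offset_own sel d j t Hd Ht) as [c [Hc Hown]]. rewrite <- Ek in Hown.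
  rewrite (straddles_iff_neg d _ j Hd Hj).
  - rewrite Hu, Hown by auto. unfold side.
    destruct excluded_middle_informative; split; intros; (lra || tauto).
  - rewrite Hu, Hown by auto. destruct (side_cases sel k) as [E|E]; rewrite E; lra.
  - intros i Hi Hij. rewrite Hu by auto. apply offset_other; auto.
Qed.

Lemma vc_lower d : (1 <= d)%nat ->
  exists H : list (pt -> Prop), shattered d H /\ (d * (d + 1) <= length H)%nat.
Proof.
  intros Hd. set (N := (d * (d + 1))%nat). exists (map (hyp d) (seq 0 N)).
  assert (Hlen : length (map (hyp d) (seq 0 N)) = N) by (rewrite length_map, length_seq; auto).
  assert (Hnth : forall k, (k < N)%nat -> nth k (map (hyp d) (seq 0 N)) (fun _ => False) = hyp d k).
  { intros k Hk. rewrite (nth_indep _ _ (hyp d 0)), map_nth, seq_nth by (rewrite ?Hlen; auto).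
    reflexivity. }
  unfold shattered. rewrite Hlen. split; [split; [|split]|lia].
  - intros k Hk. rewrite Hnth by auto. apply hyp_is_hyperplane, Hd.
  - intros k1 k2 Hk1 Hk2 Hne Heq. rewrite !Hnth in Heq by auto.
    apply Hne. symmetry. apply (meets_hyp_iff (fun k => k = k1) d k2 Hd Hk2).
    destruct (proj2 (meets_hyp_iff (fun k => k = k1) d k1 Hd Hk1) eq_refl) as [x [Hx Hh]].
    exists x. split; [auto|apply Heq, Hh].
  - intros sel. exists (vert sel d). split; [apply vert_affinely_independent, Hd|].
    intros k Hk. rewrite Hnth by auto. apply meets_hyp_iff; auto.
Qed.

Theorem lemmav (d : nat) (hd : (9 <= d)%nat) :
  (exists H : list (pt -> Prop), shattered d H /\ (d * (d + 1) <= length H)%nat) /\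
  (forall H : list (pt -> Prop), shattered d H ->
     INR (length H) <= 5 * INR d ^ 2 * log2 (INR d)).
Proof.
  split.
  - apply vc_lower. lia.
  - intros H HH. apply vc_upper; auto.
Qed.
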